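(* Let $\Omega$, $\mu$, $w$, $\alpha$ and $T_{\alpha,w,\infty}$ be as in the context, let $N\in\mathbb N$, and let $F\subseteq\Omega$ be a Borel set with $0<\mu(F)<\infty$ such that $$\inf\Big\{\prod_{k=1}^n(w\circ\alpha^{-k})(t):\ n\geq N,\ t\in F\Big\}\neq0.$$ Then the set $\{f\in L^\infty(\Omega,\mu):\ \|T^n_{\alpha,w,\infty}f\|_\infty\geq1\ \text{ for all } n\geq N\}$ is not $\sigma$-porous in $L^\infty(\Omega,\mu)$. In particular, the set of all non-hypercyclic vectors of the operator $T_{\alpha,w,\infty}$ is not $\sigma$-porous.
   Context: $\Omega$ is a locally compact Hausdorff space with a nonnegative Radon measure $\mu$; $w:\Omega\to(0,\infty)$ is a bounded measurable function; $\alpha:\Omega\to\Omega$ is a bijective bi-measurable map such that $\|f\circ\alpha\|_\infty=\|f\circ\alpha^{-1}\|_\infty=\|f\|_\infty$ for all $f\in L^\infty(\Omega,\mu)$. Here $\alpha^{-1}$ is the inverse map, $\alpha^{-k}:=(\alpha^{-1})^k$, $\alpha^k$ is the $k$-fold iterate. $T_{\alpha,w,\infty}:L^\infty(\Omega,\mu)\to L^\infty(\Omega,\mu)$ is $T_{\alpha,w,\infty}f:=w\cdot(f\circ\alpha)$. An operator $T$ on a Banach space $\mathcal X$ is hypercyclic if some $x\in\mathcal X$ (a hypercyclic vector) has dense orbit $\{T^nx:n\in\mathbb N_0\}$; non-hypercyclic vectors are those that are not hypercyclic vectors. Porosity: Let $X$ be a metric space and $0<\lambda<1$. A set $E\subseteq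 X$ is $\lambda$-porous at $x\in E$ if for each $\delta>0$ there is $y\in B(x;\delta)\setminus\{x\}$ with $B(y;\lambda\, d(x,y))\cap E=\varnothing$; $E$ is $\lambda$-porous if it is $\lambda$-porous at each of its points; $E$ is $\sigma$-$\lambda$-porous if it is a countable union of $\lambda$-porous subsets of $X$. A set is called $\sigma$-porous if it is $\sigma$-$\lambda$-porous for some $\lambda\in(0,1)$; ''not $\sigma$-porous'' means not $\sigma$-$\lambda$-porous for any $\lambda\in(0,1)$. *)

From HB Require Import structures.
From mathcomp Require Import all_boot all_order all_algebra.
From mathcomp Require Import all_classical all_reals all_analysis.
Set Implicit Arguments. Unset Strict Implicit. Unset Printing Implicit Defensive.
Import Order.TTheory GRing.Theory Num.Theory.
Import numFieldNormedType.Exports.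
Local Open Scope classical_set_scope.
Local Open Scope ring_scope.

Definition Borel (T : ptopologicalType) := g_sigma_algebraType (@open T).

Section Defs.
Context (R : realType) (T : ptopologicalType).
Variable mu : {measure set (Borel T) -> \bar R}.
Local Open Scope ereal_scope.

Definition radon_measure : Prop :=
  [/\ (forall K : set T, compact K -> mu K < +oo),
      (forall A : set (Borel T), measurable A ->
         mu A = ereal_inf [set mu U | U in [set U : set T | open U /\ A `<=` U]])
    & (forall U : set T, open U ->
         mu U = ereal_sup [set mu K | K in [set K : set T | compact K /\ K `<=` U]])].

Definition Linfnorm (f : Borel T -> R) : \bar R := 'N[mu]_(+oo)[EFin \o f].

(* f is a representative of an element of L^oo(Omega, mu) *)
Definition Linf (f : Borel T -> R) : Prop :=
  measurable_fun [set: Borel T] f /\ Linfnorm f < +oo.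

(* the L^oo distance (a pseudometric on representatives; d(f,g) = 0 iff
   f = g mu-a.e., i.e. iff f and g are the same element of L^oo) *)
Definition Ldist (f g : Borel T -> R) : \bar R := Linfnorm (f \- g)%R.

Definition lam_porous_at (lam : R) (E : set (Borel T -> R)) (x : Borel T -> R) :=
  forall delta : R, (0 < delta)%R ->
    exists y, [/\ Linf y, 0 < Ldist x y, Ldist x y < delta%:E &
      forall z, Linf z -> Ldist y z < lam%:E * Ldist x y -> ~ E z].

Definition lam_porous (lam : R) (E : set (Borel T -> R)) :=
  E `<=` Linf /\ forall x, E x -> lam_porous_at lam E x.

Definition sigma_lam_porous (lam : R) (E : set (Borel T -> R)) :=
  exists En : nat -> set (Borel T -> R),
    (forall n, lam_porous lam (En n)) /\ E = \bigcup_n En n.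

Definition sigma_porous (E : set (Borel T -> R)) :=
  exists lam : R, (0 < lam < 1)%R /\ sigma_lam_porous lam E.

Definition wcomp (alpha : Borel T -> Borel T) (w : Borel T -> R)
  (f : Borel T -> R) : Borel T -> R := fun t => (w t * f (alpha t))%R.

Definition hypercyclic_vector (Op : (Borel T -> R) -> (Borel T -> R))
  (f : Borel T -> R) :=
  Linf f /\ forall g, Linf g -> forall eps : R, (0 < eps)%R ->
    exists n : nat, Ldist (iter n Op f) g < eps%:E.

Definition non_hypercyclic_vectors (Op : (Borel T -> R) -> (Borel T -> R)) :=
  [set f | Linf f /\ ~ hypercyclic_vector Op f].

End Defs.

From HB Require Import structures.
From mathcomp Require Import all_boot all_order all_algebra.
From mathcomp Require Import all_classical all_reals all_analysis.
From mathcomp Require Import ess_sup_inf hoelder measurable_realfun lra.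
Import Order.TTheory GRing.Theory Num.Theory.
Import numFieldNormedType.Exports.
Set Implicit Arguments. Unset Strict Implicit.
Local Open Scope classical_set_scope.
Local Open Scope ring_scope.

(* 1. A Baire-type argument shows that no open ball of L^oo is sigma-porous:
      if a ball is covered by lambda-porous sets E_0, E_1, ..., one chooses
      nested balls B(c_n, r_n) with r_(n+1) <= r_n / 4 and B(c_(n+1), r_(n+1))
      disjoint from E_n.  Choosing every centre as a representative that is
      uniformly (not only a.e.) close to the previous one, the centres
      converge pointwise to a measurable g lying in every ball: g is in the
      first ball but in no E_n.  Hence a set containing a ball is not
      sigma-porous.
   2. Both sets of the theorem contain the unit ball around c = K * 1_F with
      K = 1 + 1/d, where d > 0 bounds prod_(k<n) w o alpha^k from below on
      alpha^-n(F) for every n: for ||f - c|| < 1 one has f > 1/d on F, so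
      |T^n f| > 1 on alpha^-n(F), which is not null because alpha preserves
      null sets (it preserves the L^oo norm). *)

Section GeometricCauchy.
Variables (R : realType) (u r : nat -> R).
Hypothesis r_pos : forall n, 0 < r n.
Hypothesis r_shrink : forall n, r n.+1 <= r n / 4.
Hypothesis u_step : forall n, `|u n - u n.+1| <= r n / 2.

(* r_k / 2 * (1 + 1/4 + 1/16 + ...) <= 2/3 r_k *)
Lemma geometric_tail m k : `|u k - u (k + m)%N| <= 2 / 3 * r k.
Proof.
elim: m k => [|m IH] k; first by rewrite addn0 subrr normr0 mulr_ge0 // ltW.
rewrite -addSnnS; apply: le_trans (ler_distD (u k.+1) _ _) _.
by have := u_step k; have := IH k.+1; have := r_shrink k; lra.
Qed.

(* a crude decay estimate, enough to make the tails uniformly small *)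
Lemma geometric_radius n : r n * n.+1%:R <= r 0.
Proof.
elim: n => [|n IH]; first by rewrite mulr1.
have Sn : n.+1%:R = n%:R + 1 :> R by rewrite -addn1 natrD.
have SSn : n.+2%:R = n%:R + 2 :> R by rewrite -addn2 natrD.
rewrite SSn; rewrite Sn in IH.
have := r_shrink n; have := r_pos n.+1; have := r_pos n.
by have : 0 <= n%:R :> R by []; nra.
Qed.

Lemma geometric_cvg : cvgn u.
Proof.
apply/cauchy_cvgP; apply/cauchyP => e e_gt0.
have := truncnS_gt (r 0 / e); set K := Num.truncn (r 0 / e) => K_gt.
exists (u K), K => // n /= Kn; rewrite /ball /=.
have := geometric_tail (n - K) K; rewrite subnKC //.
have := geometric_radius K; have := r_pos K; rewrite ltr_pdivrMr // in K_gt.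
by have : 0 <= K.+1%:R :> R by []; nra.
Qed.

Lemma geometric_lim_dist k : `|u k - limn u| <= 2 / 3 * r k.
Proof.
apply: (@cvgr_to_le _ \oo _ R (fun n => `|u k - u n|)).
  by apply: cvg_norm; apply: cvgB; [exact: cvg_cst | exact: geometric_cvg].
by exists k => // n /= kn; have := geometric_tail (n - k) k; rewrite subnKC.
Qed.

End GeometricCauchy.

Definition clamp (R : realDomainType) (a u : R) : R := Num.max (- a) (Num.min a u).

Lemma clamp_id (R : realDomainType) (a u : R) : `|u| <= a -> clamp a u = u.
Proof. by rewrite ler_norml => /andP[ge_a le_a]; rewrite /clamp min_r // max_r. Qed.

Lemma clamp_norm (R : realDomainType) (a u : R) : 0 <= a -> `|clamp a u| <= a.
Proof.
move=> a_ge0; rewrite ler_norml le_max lexx ge_max ge_min lexx /=.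
by rewrite (le_trans _ a_ge0) // oppr_le0.
Qed.

Section Linfty.
Context (R : realType) (T : ptopologicalType).
Variable mu : {measure set (Borel T) -> \bar R}.
Hypothesis mu_pos : (0 < mu setT)%E.
Local Open Scope ereal_scope.

Lemma LinfnormE (f : Borel T -> R) :
  Linfnorm mu f = ess_sup mu (EFin \o (Num.norm \o f)).
Proof. by rewrite /Linfnorm unlock /= mu_pos. Qed.

Lemma LinfnormP (f : Borel T -> R) (y : R) :
  reflect (\forall x \ae mu, `|f x| <= y)%R (Linfnorm mu f <= y%:E).
Proof.
rewrite LinfnormE; apply: (iffP ess_supP) => H; apply: filterS H => x /=;
  by rewrite lee_fin.
Qed.

Lemma Linfnorm_lt (f : Borel T -> R) (y : R) :
  Linfnorm mu f < y%:E -> \forall x \ae mu, (`|f x| < y)%R.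
Proof.
rewrite LinfnormE => lt_y.
apply: filterS (ess_sup_ge mu (EFin \o (Num.norm \o f))) => x /= le_sup.
by rewrite -lte_fin; apply: le_lt_trans lt_y.
Qed.

Lemma Linfnorm_ge0 (f : Borel T -> R) : 0 <= Linfnorm mu f.
Proof. exact: Lnorm_ge0. Qed.

Lemma Linfnorm_ae (f g : Borel T -> R) :
  (\forall x \ae mu, f x = g x) -> Linfnorm mu f = Linfnorm mu g.
Proof.
by move=> fg; rewrite !LinfnormE; apply: eq_ess_sup; apply: filterS fg => x /= ->.
Qed.

Lemma Ldist_tri (f g h : Borel T -> R) :
  Ldist mu f h <= Ldist mu f g + Ldist mu g h.
Proof.
rewrite /Ldist !LinfnormE; apply: le_trans (ess_supD _ _ _).
apply: le_ess_sup; apply: nearW => x /=; rewrite -EFinD lee_fin.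
by rewrite (_ : f x - h x = (f x - g x) + (g x - h x))%R ?ler_normD // addrA subrK.
Qed.

Lemma Linfnorm_le_Ldist (f g : Borel T -> R) :
  Linfnorm mu g <= Linfnorm mu f + Ldist mu f g.
Proof.
rewrite /Ldist !LinfnormE; apply: le_trans (ess_supD _ _ _).
apply: le_ess_sup; apply: nearW => x /=; rewrite -EFinD lee_fin.
by have := ler_normB (f x) (f x - g x)%R; rewrite subKr.
Qed.

Lemma Linf_bounded (f : Borel T -> R) (a : R) :
  measurable_fun setT f -> (forall t, `|f t| <= a)%R -> Linf mu f.
Proof.
move=> mf f_le; split => //; apply: (@le_lt_trans _ _ a%:E); last exact: ltry.
by apply/LinfnormP; apply: nearW.
Qed.

Lemma Linf_near (f g : Borel T -> R) :
  Linf mu f -> measurable_fun setT g -> Ldist mu f g < +oo -> Linf mu g.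
Proof.
move=> [_ f_fin] mg fg_fin; split => //.
by apply: le_lt_trans (Linfnorm_le_Ldist f g) _; rewrite lte_add_pinfty.
Qed.

(* A point at L^oo-distance at most a from c has a representative that is
   everywhere within a of c: clamp the difference to [-a, a]. *)
Lemma uniform_representative (c y : Borel T -> R) (a : R) :
  (0 <= a)%R -> Linf mu c -> Linf mu y -> Ldist mu c y <= a%:E ->
  exists y', [/\ Linf mu y', (forall t, `|c t - y' t| <= a)%R &
                 \forall t \ae mu, y' t = y t].
Proof.
move=> a_ge0 [mc _] [my y_fin] /LinfnormP cy_le.
pose y' t := (c t - clamp a (c t - y t))%R.
have y'_ae : \forall t \ae mu, y' t = y t.
  by apply: filterS cy_le => t /= ?; rewrite /y' clamp_id // opprB addrC subrK.
exists y'; split => //.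
- split; last by rewrite (Linfnorm_ae y'_ae).
  apply: measurable_funB => //; apply: measurable_maxr => //.
  by apply: measurable_minr => //; apply: measurable_funB.
- by move=> t; rewrite /y' opprB addrC subrK clamp_norm.
Qed.

Lemma porous_hole (lam : R) (E : set (Borel T -> R)) (c : Borel T -> R)
    (r : R) :
  (0 < lam)%R -> lam_porous mu lam E -> Linf mu c -> (0 < r)%R ->
  exists c' : Borel T -> R, exists r' : R,
    [/\ Linf mu c', (0 < r')%R, (r' <= r / 4)%R,
        (forall t, `|c t - c' t| <= r / 2)%R &
        forall z, Linf mu z -> Ldist mu c' z < r'%:E -> ~ E z].
Proof.
move=> lam_gt0 [_ Eporous] Lc r_gt0.
have r4_gt0 : (0 < r / 4)%R by apply: divr_gt0.
have [[x [Ex cx_lt]]|noE] := pselect (exists x, E x /\ Ldist mu c x < (r / 4)%:E);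
  last first.
  exists c, (r / 4)%R; split => //; last by move=> z _ cz Ez; apply: noE; exists z.
  by move=> t; rewrite subrr normr0 divr_ge0 // ltW.
have [y [Ly xy_gt0 xy_lt hole]] := Eporous x Ex (r / 4)%R r4_gt0.
have xy_fin : Ldist mu x y \is a fin_num.
  by rewrite ge0_fin_numE ?(lt_trans xy_lt) ?ltry // Linfnorm_ge0.
set e := fine (Ldist mu x y).
have xyE : Ldist mu x y = e%:E by rewrite fineK.
have e_gt0 : (0 < e)%R by rewrite -lte_fin -xyE.
have cy_le : Ldist mu c y <= (r / 2)%:E.
  apply: le_trans (Ldist_tri c x y) _.
  rewrite (_ : r / 2 = r / 4 + r / 4)%R; last by lra.
  by rewrite EFinD; apply: leeD; apply: ltW.
have r2_ge0 : (0 <= r / 2)%R by rewrite divr_ge0 // ltW.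
have [y' [Ly' cy' y'_ae]] := uniform_representative r2_ge0 Lc Ly cy_le.
exists y', (Num.min (lam * e) (r / 4))%R; split => //.
- by rewrite lt_min r4_gt0 andbT mulr_gt0.
- by rewrite ge_min lexx orbT.
- move=> z Lz; rewrite /Ldist (Linfnorm_ae (g := y \- z)%R); last first.
    by apply: filterS y'_ae => t /= ->.
  move=> y'z_lt; apply: (hole z Lz); apply: (lt_le_trans y'z_lt).
  by rewrite xyE -EFinM lee_fin ge_min lexx.
Qed.

Lemma nested_balls_limit (c : nat -> Borel T -> R) (r : nat -> R) :
  (forall n, Linf mu (c n)) -> (forall n, 0 < r n)%R ->
  (forall n, r n.+1 <= r n / 4)%R -> (forall n t, `|c n t - c n.+1 t| <= r n / 2)%R ->
  exists g, Linf mu g /\ forall k, Ldist mu (c k) g < (r k)%:E.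
Proof.
move=> Lc r_gt0 r_shrink c_step.
pose g t := limn (c ^~ t).
have c_cvg t : cvgn (c ^~ t) := geometric_cvg r_gt0 r_shrink (c_step ^~ t).
have dist k : Ldist mu (c k) g < (r k)%:E.
  apply: (@le_lt_trans _ _ (2 / 3 * r k)%:E).
    by apply/LinfnormP; apply: nearW => t; exact: geometric_lim_dist.
  by rewrite lte_fin; have := r_gt0 k; lra.
have mg : measurable_fun setT g.
  by apply: (measurable_fun_cvg (h := c)) => [n|t _]; [case: (Lc n) | exact: c_cvg].
exists g; split => //; apply: Linf_near (Lc 0%N) mg _.
by apply: lt_trans (dist 0%N) _; rewrite ltry.
Qed.

Lemma ball_not_sigma_porous (S : set (Borel T -> R)) (c0 : Borel T -> R)
    (r0 : R) :
  Linf mu c0 -> (0 < r0)%R ->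
  (forall f, Linf mu f -> Ldist mu c0 f < r0%:E -> S f) -> ~ sigma_porous mu S.
Proof.
move=> Lc0 r0_gt0 ballS [lam [/andP[lam_gt0 _] [E [Eporous SE]]]].
have step (kcr : nat * ((Borel T -> R) * R)) : exists cr' : (Borel T -> R) * R,
    Linf mu kcr.2.1 /\ (0 < kcr.2.2)%R ->
    [/\ Linf mu cr'.1, (0 < cr'.2)%R, (cr'.2 <= kcr.2.2 / 4)%R,
        (forall t, `|kcr.2.1 t - cr'.1 t| <= kcr.2.2 / 2)%R &
        forall z, Linf mu z -> Ldist mu cr'.1 z < cr'.2%:E -> ~ E kcr.1 z].
  have [[Lc r_gt0]|] := pselect (Linf mu kcr.2.1 /\ (0 < kcr.2.2)%R); last first.
    by exists kcr.2.
  by have [c' [r' ?]] := porous_hole lam_gt0 (Eporous kcr.1) Lc r_gt0; exists (c', r').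
have [next nextP] := choice step.
pose s := fix s n := if n is k.+1 then next (k, s k) else (c0, r0).
have inv n : Linf mu (s n).1 /\ (0 < (s n).2)%R.
  by elim: n => [|n [Lc r_gt0]] //; case: (nextP (n, s n) (conj Lc r_gt0)).
have [g [Lg g_in]] : exists g, Linf mu g /\ forall k, Ldist mu (s k).1 g < (s k).2%:E.
  apply: nested_balls_limit => n; [exact: (inv n).1 | exact: (inv n).2 | |];
    by case: (nextP (n, s n) (inv n)).
have [n _ Eng] : (\bigcup_n E n) g by rewrite -SE; apply: ballS (g_in 0%N).
by case: (nextP (n, s n) (inv n)) => _ _ _ _ hole; apply: (hole g Lg (g_in n.+1)).
Qed.

(* A map preserving the L^oo norm pulls back null sets to null sets (test the
   hypothesis on the indicator of a null set). *)
Lemma ae_comp (beta : Borel T -> Borel T) (P : Borel T -> Prop) :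
  (forall f, Linf mu f -> Linfnorm mu (f \o beta) = Linfnorm mu f) ->
  (\forall x \ae mu, P x) -> \forall x \ae mu, P (beta x).
Proof.
move=> beta_norm [A [mA muA notP_A]].
have LA : Linf mu \1_A.
  apply: (@Linf_bounded _ 1) => [|t]; first exact: measurable_indic.
  by rewrite indicE; case: (_ \in _); rewrite ?normr1 ?normr0.
have A_null : Linfnorm mu \1_A <= 0%:E.
  apply/LinfnormP; exists A; split => // t /= A1_pos; apply: contrapT => notA.
  by apply: A1_pos; rewrite indicE memNset ?normr0.
rewrite -beta_norm // in A_null; move/LinfnormP: A_null; apply: filterS => t /= A1_le0.
apply: contrapT => notP; move: A1_le0; rewrite indicE mem_set ?normr1 ?ler10 //.
exact: notP_A.
Qed.

Lemma ae_comp_iter (beta : Borel T -> Borel T) (n : nat) (P : Borel T -> Prop) :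
  (forall f, Linf mu f -> Linfnorm mu (f \o beta) = Linfnorm mu f) ->
  (\forall x \ae mu, P x) -> \forall x \ae mu, P (iter n beta x).
Proof.
move=> beta_norm; elim: n P => [//|n IH] P /IH /(ae_comp beta_norm).
by apply: filterS => x; rewrite iterSr.
Qed.

Lemma measure_setT_gt0 (F : set (Borel T)) :
  measurable F -> 0 < mu F -> 0 < mu setT.
Proof. by move=> mF F_gt0; apply: lt_le_trans F_gt0 _; apply: le_measure; rewrite ?inE. Qed.

Lemma not_ae_notin (F : set (Borel T)) :
  measurable F -> 0 < mu F -> ~ \forall x \ae mu, ~ F x.
Proof.
move=> mF F_gt0 [A [mA muA F_A]]; have : mu F <= mu A.
  by apply: le_measure; rewrite ?inE // => x Fx; apply: F_A => /(_ Fx).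
by rewrite muA leNgt F_gt0.
Qed.

Lemma Linf_scaled_indicator (F : set (Borel T)) (K : R) :
  measurable F -> (0 <= K)%R -> Linf mu (cst K \* \1_F)%R.
Proof.
move=> mF K_ge0; apply: (Linf_bounded (a := K)) => [|t].
  exact: measurable_funM (measurable_cst _) (measurable_indic _).
by rewrite /= indicE; case: (t \in F); rewrite /= ?mulr1 ?mulr0 ?normr0 ?ger0_norm.
Qed.

Lemma hypercyclic_small_iterate (Op : (Borel T -> R) -> Borel T -> R)
    (f : Borel T -> R) :
  hypercyclic_vector mu Op f -> exists n, Linfnorm mu (iter n Op f) < 1%:E.
Proof.
have L0 : Linf mu (cst 0%R) by apply: (Linf_bounded (a := 0)) => [|t]; rewrite ?normr0.
move=> [_ /(_ (cst 0%R) L0 1%R ltr01) [n fn_lt]]; exists n; move: fn_lt.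
by rewrite /Ldist (_ : _ \- _ = iter n Op f)%R //; apply: funext => t /=; rewrite subr0.
Qed.

End Linfty.

Lemma iter_cancel (U : Type) (a b : U -> U) (n : nat) (t : U) :
  cancel a b -> iter n b (iter n a t) = t.
Proof. by move=> ab; elim: n t => [//|n IH] t; rewrite iterSr /= ab IH. Qed.

(* Lower bounds on products of weights.  A lower bound d > 0 valid for all
   n >= N persists, up to the factor max(M, 1)^N, for every n, since each of
   the at most N missing factors is at most M. *)
Lemma weight_products_lower_bound (R : realFieldType) (U : Type)
    (w : U -> R) (beta : U -> U) (N : nat) (F : set U) (M d : R) :
  (forall t, 0 < w t) -> (forall t, w t <= M) -> 0 < d ->
  (forall n t, (N <= n)%N -> F t -> d <= \prod_(1 <= k < n.+1) w (iter k beta t)) ->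
  forall n t, F t -> d / Num.max M 1 ^+ N <= \prod_(1 <= k < n.+1) w (iter k beta t).
Proof.
move=> w_gt0 w_le d_gt0 d_le n t Ft.
set M' := Num.max M 1.
have M'_ge1 : 1 <= M' by rewrite le_max lexx orbT.
have M'N_ge1 : 1 <= M' ^+ N by exact: exprn_ege1.
have M'N_gt0 : 0 < M' ^+ N by apply: lt_le_trans M'N_ge1.
have d_le_d' : d / M' ^+ N <= d by rewrite ler_pdivrMr // ler_peMr // ltW.
have [nN|Nn] := leqP N n; first exact: le_trans d_le_d' (d_le n t nN Ft).
have d_split : d <= \prod_(1 <= k < n.+1) w (iter k beta t) *
                    \prod_(n.+1 <= k < N.+1) w (iter k beta t).
  by rewrite -big_cat_nat //; [apply: d_le | rewrite ltnS ltnW].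
have tail_le : \prod_(n.+1 <= k < N.+1) w (iter k beta t) <= M' ^+ N.
  apply: (@le_trans _ _ (\prod_(n.+1 <= k < N.+1) M')).
    apply: ler_prod => k _; rewrite ltW //=; apply: le_trans (w_le _) _.
    by rewrite le_max lexx.
  by rewrite prodr_const_nat; apply: ler_weXn2l => //; rewrite subSS leq_subr.
have prod_gt0 : 0 < \prod_(1 <= k < n.+1) w (iter k beta t) by apply: prodr_gt0.
by rewrite ler_pdivrMr //; apply: le_trans d_split _; rewrite ler_pM2l.
Qed.

Lemma ereal_inf_pos_bound (R : realType) (S : set (\bar R)) :
  (forall y, S y -> (0 <= y)%E) -> ereal_inf S != 0%E ->
  exists2 d : R, 0 < d & forall y, S y -> (d%:E <= y)%E.
Proof.
move=> S_ge0 inf_neq0; have inf_ge0 : (0 <= ereal_inf S)%E by apply/ereal_infP.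
have inf_lb y : S y -> (ereal_inf S <= y)%E by move=> Sy; apply: ereal_inf_lbound.
move: inf_ge0 inf_neq0 inf_lb; case: (ereal_inf S) => [x| |] // x_ge0 x_neq0 inf_lb.
- exists x => [|y /inf_lb //]; rewrite lt_def -lee_fin x_ge0 andbT.
  by apply: contra x_neq0 => /eqP ->.
- by exists 1 => // y /inf_lb; rewrite leye_eq => /eqP ->; exact: leey.
Qed.

(* the pointwise estimate behind the theorem: if x is within 1 of 1 + 1/d
   then x > 1/d, so P x > 1 whenever P >= d *)
Lemma reciprocal_bound (R : realFieldType) (d P x : R) :
  0 < d -> d <= P -> `|1 + d^-1 - x| < 1 -> 1 < `|P * x|.
Proof.
move=> d_gt0 d_le /ltr_normlW x_gt; apply: lt_le_trans (ler_norm _).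
have dV : d * d^-1 = 1 by rewrite divff // gt_eqF.
have dV_gt0 : 0 < d^-1 by rewrite invr_gt0.
by nra.
Qed.

Section WeightedComposition.
Context (R : realType) (T : ptopologicalType).
Variables (mu : {measure set (Borel T) -> \bar R}) (w : Borel T -> R).
Variables (alpha alpha_inv : Borel T -> Borel T).
Hypothesis alpha_K : cancel alpha alpha_inv.
Hypothesis alpha_inv_K : cancel alpha_inv alpha.
Hypothesis alpha_norm :
  forall f, Linf mu f -> Linfnorm mu (f \o alpha) = Linfnorm mu f.
Hypothesis alpha_inv_norm :
  forall f, Linf mu f -> Linfnorm mu (f \o alpha_inv) = Linfnorm mu f.

Lemma iter_wcomp (f : Borel T -> R) (n : nat) (t : Borel T) :
  iter n (wcomp alpha w) f t =
  (\prod_(0 <= k < n) w (iter k alpha t)) * f (iter n alpha t).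
Proof.
elim: n t => [|n IH] t; first by rewrite big_geq // mul1r.
rewrite iterS /wcomp IH big_nat_recl // mulrA /= -iterSr -iterS.
by congr (_ * _ * _); apply: eq_bigr => k _; rewrite -iterSr -iterS.
Qed.

Lemma prod_weights_back (n : nat) (t : Borel T) :
  \prod_(1 <= k < n.+1) w (iter k alpha_inv (iter n alpha t)) =
  \prod_(0 <= k < n) w (iter k alpha t).
Proof.
elim: n t => [|n IH] t; first by rewrite !big_geq.
rewrite [LHS]big_nat_recr // [RHS]big_nat_recl // iter_cancel //.
rewrite (_ : iter n.+1 alpha t = iter n alpha (alpha t)) ?iterSr // IH mulrC.
by congr (_ * _); apply: eq_bigr => k _; rewrite iterSr.
Qed.

(* Every f in the unit ball around (1 + 1/d) 1_F has ||T^n f|| >= 1 for all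
   n: otherwise alpha^-n(F) would be null, contradicting mu F > 0. *)
Lemma orbit_avoids_unit_ball (F : set (Borel T)) (d : R) :
  measurable F -> (0 < mu F)%E -> 0 < d ->
  (forall n t, F t -> d <= \prod_(1 <= k < n.+1) w (iter k alpha_inv t)) ->
  forall f, Linf mu f -> (Ldist mu (cst (1 + d^-1) \* \1_F)%R f < 1%:E)%E ->
  forall n, (1%:E <= Linfnorm mu (iter n (wcomp alpha w) f))%E.
Proof.
move=> mF F_gt0 d_gt0 d_le f Lf cf_lt n; rewrite leNgt; apply/negP => Tf_lt.
have mu_pos := measure_setT_gt0 mF F_gt0.
have outside : \forall t \ae mu, ~ F (iter n alpha t).
  apply: filterS2 (Linfnorm_lt mu_pos Tf_lt)
    (ae_comp_iter mu_pos n alpha_norm (Linfnorm_lt mu_pos cf_lt)) => t Tf_t cf_t Ft.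
  move: Tf_t cf_t; rewrite iter_wcomp /= indicE mem_set // mulr1 => Tf_t cf_t.
  have := d_le n _ Ft; rewrite prod_weights_back => d_le_prod.
  by move: Tf_t; rewrite ltNge ltW // (reciprocal_bound d_gt0 d_le_prod cf_t).
apply: (not_ae_notin mF F_gt0).
by apply: filterS (ae_comp_iter mu_pos n alpha_inv_norm outside) => t; rewrite iter_cancel.
Qed.

End WeightedComposition.

Unset Implicit Arguments.

Theorem mainTheorem13 (R : realType) (T : ptopologicalType)
  (mu : {measure set (Borel T) -> \bar R})
  (w : Borel T -> R) (alpha alpha_inv : Borel T -> Borel T)
  (N : nat) (F : set (Borel T)) :
  hausdorff_space T -> locally_compact [set: T] -> radon_measure mu ->
  measurable_fun [set: Borel T] w ->
  (exists M : R, forall t, w t <= M) -> (forall t, 0 < w t) ->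
  cancel alpha alpha_inv -> cancel alpha_inv alpha ->
  measurable_fun [set: Borel T] alpha ->
  measurable_fun [set: Borel T] alpha_inv ->
  (forall f, Linf mu f ->
     Linfnorm mu (f \o alpha) = Linfnorm mu f /\
     Linfnorm mu (f \o alpha_inv) = Linfnorm mu f) ->
  (0 < N)%N ->
  measurable F -> (0 < mu F)%E -> (mu F < +oo)%E ->
  ereal_inf [set y : \bar R | exists (n : nat) (t : Borel T),
     [/\ (N <= n)%N, F t &
          y = ((\prod_(1 <= k < n.+1) w (iter k alpha_inv t))%:E)]]
    != 0%E ->
  ~ sigma_porous mu
      [set f | Linf mu f /\
         forall n : nat, (N <= n)%N ->
           (1 <= Linfnorm mu (iter n (wcomp alpha w) f))%E]
  /\ ~ sigma_porous mu (non_hypercyclic_vectors mu (wcomp alpha w)).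
Proof.
move=> _ _ _ _ [M w_le] w_gt0 alpha_K alpha_inv_K _ _ norm_pres _ mF F_gt0 _ inf_neq0.
have mu_pos := measure_setT_gt0 mF F_gt0.
set S := (X in ereal_inf X) in inf_neq0.
have S_ge0 y : S y -> (0 <= y)%E.
  by move=> [n [t [_ _ ->]]]; rewrite lee_fin prodr_ge0 // => k _; apply: ltW.
have [d0 d0_gt0 d0_le] := ereal_inf_pos_bound S_ge0 inf_neq0.
set d := d0 / Num.max M 1 ^+ N.
have d_gt0 : 0 < d.
  by rewrite divr_gt0 // exprn_gt0 // (lt_le_trans ltr01) // le_max lexx orbT.
have d_le : forall n t, F t -> d <= \prod_(1 <= k < n.+1) w (iter k alpha_inv t).
  apply: weight_products_lower_bound => // n t nN Ft.
  by rewrite -lee_fin; apply: d0_le; exists n, t.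
(* both sets contain the unit ball around (1 + 1/d) 1_F *)
have K_ge0 : 0 <= 1 + d^-1 by rewrite addr_ge0 // invr_ge0 ltW.
have Lc := Linf_scaled_indicator mu_pos mF K_ge0.
have orbit := orbit_avoids_unit_ball alpha_K alpha_inv_K
  (fun g Lg => (norm_pres g Lg).1) (fun g Lg => (norm_pres g Lg).2) mF F_gt0 d_gt0 d_le.
split; apply: (ball_not_sigma_porous mu_pos Lc ltr01) => f Lf cf_lt.
  by split => // n _; apply: orbit.
split => // /hypercyclic_small_iterate [//|n].
by rewrite ltNge orbit.
Qed.
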